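(* Let $G$, $H$, the supervisors with $\Sigma_{o,i},\Sigma_{c,i},N_{o,i}$, a controllable event $\sigma\in\Sigma_c$, $N=\max\{N_{o,i}:i\in I^c(\sigma)\}$, and the verifier $V^N_\sigma$ with reachable state set $X^N_\sigma$ be as in the context. Then the following are equivalent: (a) for every $s\in\mathcal{L}(H)$ with $|s|\ge N$, if $s\sigma\in\mathcal{L}(G)\setminus\mathcal{L}(H)$ then for every $(s_i)_{i\in I^c(\sigma)}\in\mathcal{T}^{\sigma}_{conf}(s)$ there exists $i\in I^c(\sigma)$ with $s_i\sigma\notin\mathcal{L}(H^{aug}_{N_{o,i}})$; (b) there is no state $(q,(q_i)_{i\in I^c(\sigma)},N)\in X^N_\sigma$ with $\sigma\in\Gamma(q)\setminus\Gamma_H(q)$ and $\sigma\in\Gamma^{aug}_{H,N_{o,i}}(q_i)$ for all $i\in I^c(\sigma)$.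
   Context: $G=(Q,\Sigma,\delta,\Gamma,q_0,Q_m)$ is a deterministic finite automaton (transition function extended to strings; $\Gamma(q)$ = set of events defined at $q$; $\mathcal{L}(G)$ its generated language). $H=(Q_H,\Sigma,\delta_H,\Gamma_H,q_0,Q_{m,H})$ is a sub-automaton of $G$. For a string $s$, $|s|$ is its length, $s_{-m}$ its prefix of length $\max\{0,|s|-m\}$, $\Sigma^{\le M}$ the strings of length at most $M$. Supervisors $I=\{1,\dots,n\}$: supervisor $i$ has observable events $\Sigma_{o,i}$, $\Sigma_{uo,i}=\Sigma\setminus\Sigma_{o,i}$, controllable events $\Sigma_{c,i}$, delay bound $N_{o,i}\in\mathbb{N}$; $\Sigma_c=\bigcup_i\Sigma_{c,i}$, $I^c(\sigma)=\{i:\sigma\in\Sigma_{c,i}\}$. $P_i$ is natural projection onto $\Sigma_{o,i}^*$; $\Theta_i^{N_{o,i}}(s)=\{P_i(s_{-m}):0\le m\le N_{o,i}\}$. For $s\in\mathcal{L}(H)$, $\mathcal{T}^\sigma_{conf}(s)$ is the set of tuples $(s_i)_{i\in I^c(\sigma)}$ with $P_i(s_i)\in\Theta_i^{N_{o,i}}(s)$ for all $i\in I^c(\sigma)$. Augmented automaton $H^{aug}_N$: states $Q_H\cup\{q_{dis}\}$, initial state $q_0$; for $q\in Q_H$, $e\in\Sigma$: $\delta^{aug}(q,e)=\delta_H(q,e)$ if $e\in\Gamma_H(q)$, $=q_{dis}$ if $e\notin\Gamma_H(q)$ and $e\in\Gamma_H(\delta_H(q,s'))$ for some $s'\in\Sigma^{\le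 N}$ with $\delta_H(q,s')$ defined, undefined otherwise; $q_{dis}$ has no outgoing transitions; $\Gamma^{aug}_{H,N}(q)$ is the set of events defined at $q$ in $H^{aug}_N$. Let $\Xi$ be the set of tuples $(q,(q_i)_{i\in I^c(\sigma)})$ such that there exist $t\in\mathcal{L}(H)$ with $q=\delta_H(q_0,t)$ and, for each $i\in I^c(\sigma)$, $s_i\in\mathcal{L}(H)$ with $q_i=\delta_H(q_0,s_i)$ and $P_i(s_i)=P_i(t)$. Verifier $V^N_\sigma$: states are tuples $(q,(q_i)_{i\in I^c(\sigma)},d)$ with $q,q_i\in Q_H$, $d\in[0,N]$; set of initial states $\{(q,(q_i)_i,0):(q,(q_i)_i)\in\Xi\}$. At a state $(q,(q_i)_i,d)$ and for $e\in\Sigma$, each $i\in I^c(\sigma)$ falls in one case: D1: $N-d>N_{o,i}$, $e\in\Sigma_{o,i}$; D2: $N-d>N_{o,i}$, $e\in\Sigma_{uo,i}$; D3: $N-d\le N_{o,i}$, $\sigma\notin\Gamma^{aug}_{H,N_{o,i}}(q_i)$, $e\in\Sigma_{o,i}$; D4: $N-d\le N_{o,i}$, $\sigma\notin\Gamma^{aug}_{H,N_{o,i}}(q_i)$, $e\in\Sigma_{uo,i}$; D5: $N-d\le N_{o,i}$, $\sigma\in\Gamma^{aug}_{H,N_{o,i}}(q_i)$. Type-1 transition: if $d+1\le N$, $\delta_H(q,e)$ is defined, and $\delta_H(q_i,e)$ is defined for every $i$ in case D1 or D3, there is a transition to $(\delta_H(q,e),(q_i')_i,d+1)$ with $q_i'=\delta_H(q_i,e)$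 for $i$ in D1 or D3 and $q_i'=q_i$ otherwise. Type-2 transition: for each $i$ in case D2 or D4 with $\delta_H(q_i,e)$ defined, there is a transition to the state obtained by replacing $q_i$ by $\delta_H(q_i,e)$, all other components unchanged. $X^N_\sigma$ is the set of states reachable from the initial states. *)

From mathcomp Require Import all_boot.
Set Implicit Arguments. Unset Strict Implicit. Unset Printing Implicit Defensive.

Inductive run (X A : Type) (R : X -> A -> X -> Prop) : X -> seq A -> X -> Prop :=
  | run_nil x : run R x [::] x
  | run_cons x a y s z : R x a y -> run R y s z -> run R x (a :: s) z.

Section Automata.
Variables (Q E : finType).

Fixpoint ext (d : Q -> E -> option Q) (q : Q) (s : seq E) : option Q :=
  match s with
  | [::] => Some q
  | e :: s' => match d q e with Some q' => ext d q' s' | None => None end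
  end.

Definition lang (d : Q -> E -> option Q) (q0 : Q) (s : seq E) : Prop :=
  ext d q0 s <> None.

Definition active (d : Q -> E -> option Q) (q : Q) (e : E) : Prop :=
  d q e <> None.

Definition is_subautomaton (dG : Q -> E -> option Q) (q0 : Q)
  (QH : {set Q}) (dH : Q -> E -> option Q) : Prop :=
  q0 \in QH /\
  forall q e q', dH q e = Some q' -> [/\ q \in QH, q' \in QH & dG q e = Some q'].

Definition proj (So : {set E}) (s : seq E) : seq E := [seq e <- s | e \in So].

Definition trunc (m : nat) (s : seq E) : seq E := take (size s - m) s.

Definition Theta (So : {set E}) (No : nat) (s w : seq E) : Prop :=
  exists2 m, m <= No & w = proj So (trunc m s).

(* Augmented automaton H^aug_N : states [option Q], [None] = q_dis. *)
Definition aug_step (dH : Q -> E -> option Q) (N : nat)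
  (x : option Q) (e : E) (y : option Q) : Prop :=
  match x with
  | None => False
  | Some q =>
      match dH q e with
      | Some q' => y = Some q'
      | None => y = None /\
          exists s', size s' <= N /\
            exists q'', ext dH q s' = Some q'' /\ active dH q'' e
      end
  end.

Definition aug_lang (dH : Q -> E -> option Q) (N : nat) (q0 : Q) (s : seq E) : Prop :=
  exists y, run (aug_step dH N) (Some q0) s y.

Definition aug_active (dH : Q -> E -> option Q) (N : nat) (q : Q) (e : E) : Prop :=
  exists y, aug_step dH N (Some q) e y.

Variables (n : nat) (So Sc : 'I_n -> {set E}) (No : 'I_n -> nat) (sigma : E).

Definition Ic := {i : 'I_n | sigma \in Sc i}.

Definition vstate := (Q * (Ic -> Q) * nat)%type.

Variables (dH : Q -> E -> option Q) (q0 : Q) (N : nat).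

Definition vinit (x : vstate) : Prop :=
  let '(q, f, d) := x in
  d = 0 /\
  exists t, lang dH q0 t /\ ext dH q0 t = Some q /\
    forall i : Ic, exists si, lang dH q0 si /\ ext dH q0 si = Some (f i) /\
      proj (So (val i)) si = proj (So (val i)) t.

Definition caseD13 (f : Ic -> Q) (d : nat) (e : E) (i : Ic) : Prop :=
  (No (val i) < N - d /\ e \in So (val i)) \/
  (N - d <= No (val i) /\ ~ aug_active dH (No (val i)) (f i) sigma /\ e \in So (val i)).

Definition caseD24 (f : Ic -> Q) (d : nat) (e : E) (i : Ic) : Prop :=
  (No (val i) < N - d /\ e \notin So (val i)) \/
  (N - d <= No (val i) /\ ~ aug_active dH (No (val i)) (f i) sigma /\ e \notin So (val i)).

Definition vstep (x : vstate) (e : E) (y : vstate) : Prop :=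
  let '(q, f, d) := x in
  let '(q', f', d') := y in
  (d.+1 <= N /\ dH q e = Some q' /\ d' = d.+1 /\
   forall i, (caseD13 f d e i -> dH (f i) e = Some (f' i)) /\
             (~ caseD13 f d e i -> f' i = f i))
  \/
  (exists i, caseD24 f d e i /\ dH (f i) e = Some (f' i) /\ q' = q /\ d' = d /\
     forall j, j <> i -> f' j = f j).

Inductive vreach : vstate -> Prop :=
  | vreach_init x : vinit x -> vreach x
  | vreach_step x e y : vreach x -> vstep x e y -> vreach y.

End Automata.

From mathcomp Require Import all_boot zify.
From Stdlib Require Import Classical.
Set Implicit Arguments. Unset Strict Implicit. Unset Printing Implicit Defensive.

(* (a) -> (b): every reachable verifier state (q, f, d) is witnessed by a plant
   string t u with |u| = d leading to q and, for each supervisor i, a string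
   leading to f i that i cannot distinguish from t (take k u), where k < d only
   once component i is frozen (case D5).  A violating state at depth N thus
   yields a string s = t u and a confusion tuple refuting (a).
   (b) -> (a): a counterexample s = t0 u, (s_i) is replayed by the verifier:
   type-1 transitions follow the last N events u of s, and in between type-2
   transitions let each component run along the unobservable events of s_i,
   until it is frozen or has consumed s_i.  At depth N this is a violating
   state. *)

Lemma run_cons_inv (X A : Type) (R : X -> A -> X -> Prop) x a s z :
  run R x (a :: s) z -> exists2 y, R x a y & run R y s z.
Proof. by move=> H; inversion H; exists y. Qed.

Lemma filter_eq_cat (T : Type) (a : pred T) w l1 l2 :
  filter a w = l1 ++ l2 ->
  exists w1 w2, [/\ w = w1 ++ w2, filter a w1 = l1 & filter a w2 = l2].
Proof.
elim: w l1 => [|x w IH] [|y l1] //=.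
- by move=> <-; exists [::], [::].
- by move=> w_l2; exists [::], (x :: w).
- case: ifP => ax.
  + case=> <- /(IH l1)[w1 [w2 [-> <- <-]]].
    by exists (x :: w1), w2; rewrite /= ax.
  + move=> /(IH (y :: l1))[w1 [w2 [-> <- <-]]].
    by exists (x :: w1), w2; rewrite /= ax.
Qed.

Section Projection.
Variables (E : finType) (S : {set E}).

Lemma proj_cat s1 s2 : proj S (s1 ++ s2) = proj S s1 ++ proj S s2.
Proof. exact: filter_cat. Qed.

Lemma proj_cons e s : proj S (e :: s) = if e \in S then e :: proj S s else proj S s.
Proof. by []. Qed.

Lemma proj_rcons s e :
  proj S (rcons s e) = if e \in S then rcons (proj S s) e else proj S s.
Proof. exact: filter_rcons. Qed.

Lemma trunc_cat (t u : seq E) k : k <= size u -> trunc (size u - k) (t ++ u) = t ++ take k u.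
Proof.
move=> le_k; rewrite /trunc size_cat.
have -> : size t + size u - (size u - k) = size t + k by lia.
by rewrite takeD take_size_cat // drop_size_cat.
Qed.

Definition starts_observable (r : seq E) : bool :=
  if r is e :: _ then e \in S else true.

End Projection.

Section Runs.
Variables (Q E : finType).
Implicit Types (d dG dH : Q -> E -> option Q) (q : Q) (s : seq E).

Lemma ext_cat d q s1 s2 :
  ext d q (s1 ++ s2) = if ext d q s1 is Some q' then ext d q' s2 else None.
Proof. by elim: s1 q => [|e s1 IH] q //=; case: (d q e). Qed.

Lemma ext_rcons d q s e :
  ext d q (rcons s e) = if ext d q s is Some q' then d q' e else None.
Proof. by rewrite -cats1 ext_cat; case: (ext d q s) => //= q'; case: (d q' e). Qed.

Lemma ext_catl d q s1 s2 : ext d q (s1 ++ s2) <> None -> exists q', ext d q s1 = Some q'.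
Proof. by rewrite ext_cat; case: (ext d q s1) => [q'|] // _; exists q'. Qed.

Lemma ext_next d q s e s' q' :
  ext d q s = Some q' -> ext d q (s ++ e :: s') <> None -> exists y, d q' e = Some y.
Proof.
rewrite ext_cat => -> /=.
by case: (d q' e) => [y _ | /(_ erefl) []]; first exists y.
Qed.

Lemma lang_rcons d q0 s q e : ext d q0 s = Some q -> lang d q0 (rcons s e) <-> active d q e.
Proof. by rewrite /lang ext_rcons => ->. Qed.

Lemma subautomaton_ext dG q0 QH dH q s q' :
  is_subautomaton dG q0 QH dH -> ext dH q s = Some q' -> ext dG q s = Some q'.
Proof.
case=> _ subH; elim: s q => [|e s IH] q //=.
by case Hq: (dH q e) => [q''|] // /IH; have [_ _ ->] := subH _ _ _ Hq.
Qed.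

Lemma aug_lang_rcons dH M q0 w a :
  aug_lang dH M q0 (rcons w a) <-> exists2 x, ext dH q0 w = Some x & aug_active dH M x a.
Proof.
rewrite /aug_lang; elim: w q0 => [|e w IH] q /=.
  split=> [[y run_a] | [_ [<-] [y step]]].
    by have [y' step _] := run_cons_inv run_a; exists q => //; exists y'.
  by exists y; apply: run_cons step (run_nil _ _).
case Hq: (dH q e) => [q'|]; split.
- case=> y run_ew; have [y' /=] := run_cons_inv run_ew; rewrite Hq => -> run_w.
  by apply/IH; exists y.
- by case/IH=> y run_w; exists y; apply: run_cons run_w; rewrite /= Hq.
- case=> y run_ew; have [y' /=] := run_cons_inv run_ew; rewrite Hq => -[-> _].
  by case: w {IH run_ew} => [|e' w] run_w; have [? []] := run_cons_inv run_w.
- by case=> x none_some; discriminate none_some.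
Qed.

End Runs.

Section Verifier.
Variables (Q E : finType) (dG dH : Q -> E -> option Q) (q0 : Q) (QH : {set Q}).
Hypothesis subH : is_subautomaton dG q0 QH dH.
Variables (n : nat) (So Sc : 'I_n -> {set E}) (No : 'I_n -> nat) (sigma : E) (N : nat).

Local Notation Ics := (Ic Sc sigma).
Local Notation obs i := (So (val i)).
Local Notation delay i := (No (val i)).
Local Notation reached := (vreach So No dH q0 N).
Local Notation caseD13 := (caseD13 So No dH N).
Local Notation caseD24 := (caseD24 So No dH N).

Definition delay_coobservable : Prop :=
  forall s : seq E, lang dH q0 s -> N <= size s ->
    lang dG q0 (rcons s sigma) -> ~ lang dH q0 (rcons s sigma) ->
    forall si : Ics -> seq E,
      (forall i, Theta (obs i) (delay i) s (proj (obs i) (si i))) ->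
      exists i, ~ aug_lang dH (delay i) q0 (rcons (si i) sigma).

Definition violation_reachable : Prop :=
  exists (q : Q) (f : Ics -> Q),
    reached (q, f, N) /\ active dG q sigma /\ ~ active dH q sigma /\
    forall i, aug_active dH (delay i) (f i) sigma.

(* Case D5: component [i] no longer moves. *)
Definition frozen (i : Ics) (x : Q) (d : nat) : Prop :=
  N - d <= delay i /\ aug_active dH (delay i) x sigma.

Lemma frozen_mono i x k d : k <= d -> frozen i x k -> frozen i x d.
Proof. by move=> le_kd [le_Nk act]; split=> //; lia. Qed.

Lemma caseD13E f d e i : caseD13 f d e i <-> e \in obs i /\ ~ frozen i (f i) d.
Proof.
rewrite /caseD13 /frozen; split.
- by case=> [[lt eo] | [_ [nact eo]]]; split=> // -[le act]; [lia | exact: nact].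
- move=> [eo nfr]; case: (leqP (N - d) (delay i)) => le; last by left.
  by right; split=> //; split=> // act; apply: nfr.
Qed.

Lemma caseD24E f d e i : caseD24 f d e i <-> e \notin obs i /\ ~ frozen i (f i) d.
Proof.
rewrite /caseD24 /frozen; split.
- by case=> [[lt eo] | [_ [nact eo]]]; split=> // -[le act]; [lia | exact: nact].
- move=> [eo nfr]; case: (leqP (N - d) (delay i)) => le; last by left.
  by right; split=> //; split=> // act; apply: nfr.
Qed.

Definition component_witness (t u : seq E) (i : Ics) (x : Q) : Prop :=
  exists si k, [/\ ext dH q0 si = Some x, k <= size u,
    proj (obs i) si = proj (obs i) (t ++ take k u) & k = size u \/ frozen i x k].

Definition witnessed (v : vstate Q Sc sigma) : Prop :=
  let '(q, f, d) := v in
  exists t u, [/\ size u = d, ext dH q0 (t ++ u) = Some q &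
    forall i, component_witness t u i (f i)].

Lemma witnessed_init v : vinit So dH q0 v -> witnessed v.
Proof.
case: v => [[q f] d] [-> [t [_ [run_t wit]]]].
exists t, [::]; split=> //; first by rewrite cats0.
move=> i; have [si [_ [run_si proj_si]]] := wit i.
by exists si, 0; split=> //; [rewrite cats0 | left].
Qed.

Lemma component_witness_type1 t u e f f' i :
  component_witness t u i (f i) ->
  (caseD13 f (size u) e i -> dH (f i) e = Some (f' i)) ->
  (~ caseD13 f (size u) e i -> f' i = f i) ->
  component_witness t (rcons u e) i (f' i).
Proof.
move=> [si [k [run_si le_k proj_si lag]]] move_i stay_i.
have [fr | nfr] := classic (frozen i (f i) k).
  have nD13 : ~ caseD13 f (size u) e i.
    by case/caseD13E=> _; apply; apply: frozen_mono fr.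
  exists si, k; rewrite stay_i //; split=> //; first by rewrite size_rcons leqW.
  - by rewrite -cats1 takel_cat.
  - by right.
have {lag} k_u : k = size u by case: lag.
subst k.
have [D13 | nD13] := classic (caseD13 f (size u) e i).
  have [eo _] := (caseD13E _ _ _ _).1 D13.
  exists (rcons si e), (size u).+1; split; last by left; rewrite size_rcons.
  - by rewrite ext_rcons run_si move_i.
  - by rewrite size_rcons.
  - by rewrite take_oversize ?size_rcons // -rcons_cat !proj_rcons eo proj_si take_size.
have eo : e \notin obs i by apply/negP => eo; apply: nD13; apply/caseD13E.
exists si, (size u).+1; rewrite stay_i //; split; last by left; rewrite size_rcons.
- by [].
- by rewrite size_rcons.
- by rewrite take_oversize ?size_rcons // -rcons_cat proj_rcons (negbTE eo) proj_si take_size.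
Qed.

Lemma component_witness_type2 t u e f i y :
  component_witness t u i (f i) -> caseD24 f (size u) e i -> dH (f i) e = Some y ->
  component_witness t u i y.
Proof.
move=> [si [k [run_si le_k proj_si lag]]] /caseD24E[eo nfr] step.
have {lag} k_u : k = size u.
  by case: lag => // fr; case: nfr; apply: frozen_mono fr.
subst k; exists (rcons si e), (size u); split; last by left.
- by rewrite ext_rcons run_si.
- by [].
- by rewrite proj_rcons (negbTE eo).
Qed.

Lemma reached_witnessed v : reached v -> witnessed v.
Proof.
elim=> {v} [v /witnessed_init // | [[q f] d] e [[q' f'] d'] _ [t [u [<- run_u wit]]]].
case=> [[_ [step [-> moves]]] | [i [D24 [step_i [-> [-> others]]]]]].
  exists t, (rcons u e); split; first by rewrite size_rcons.
    by rewrite -rcons_cat ext_rcons run_u.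
  by move=> j; have [move_j stay_j] := moves j; apply: component_witness_type1.
exists t, u; split=> // j.
have [-> | ji] := eqVneq j i; first exact: component_witness_type2 (wit i) D24 step_i.
by rewrite others //; apply/eqP.
Qed.

Lemma no_violation_of_coobservable : delay_coobservable -> ~ violation_reachable.
Proof.
move=> coobs [q [f [/reached_witnessed [t [u [size_u run_s wit]]] [actG [nactH act_f]]]]].
have [si wit_si] := fin_all_exists wit.
have [k wit_k] := fin_all_exists wit_si.
have lang_s : lang dH q0 (t ++ u) by rewrite /lang run_s.
have size_s : N <= size (t ++ u) by rewrite size_cat size_u leq_addl.
have langG : lang dG q0 (rcons (t ++ u) sigma).
  exact/(lang_rcons _ (subautomaton_ext subH run_s)).
have nlangH : ~ lang dH q0 (rcons (t ++ u) sigma) by move/(lang_rcons _ run_s).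
have theta i : Theta (obs i) (delay i) (t ++ u) (proj (obs i) (si i)).
  have [_ le_k proj_si lag] := wit_k i.
  exists (N - k i); first by case: lag => [-> | []]; rewrite ?size_u ?subnn.
  by rewrite -size_u trunc_cat.
have [i] := coobs _ lang_s size_s langG nlangH si theta; apply.
by apply/aug_lang_rcons; exists (f i); [case: (wit_k i) | apply: act_f].
Qed.

Section Simulation.
(* A counterexample to (a) with [s = t0 ++ u], [size u = N]; supervisor [i]
   observes [s] with delay [m i]. *)
Variables (t0 u : seq E) (si : Ics -> seq E) (m : Ics -> nat).
Hypotheses (size_u : size u = N) (lang_s : lang dH q0 (t0 ++ u)).
Hypothesis m_le : forall i, m i <= delay i.
Hypothesis proj_si :
  forall i, proj (obs i) (si i) = proj (obs i) (t0 ++ take (N - m i) u).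
Hypothesis aug_si :
  forall i, exists2 x, ext dH q0 (si i) = Some x & aug_active dH (delay i) x sigma.

(* Component [i] is at [x] after a prefix of [si i] that [i] cannot tell from
   [t0 ++ take d u]; it is saturated if no type-2 move along [si i] is pending. *)
Definition follows (i : Ics) (x : Q) (d : nat) (r : seq E) : Prop :=
  exists2 p, si i = p ++ r &
    ext dH q0 p = Some x /\ proj (obs i) p = proj (obs i) (t0 ++ take d u).

Definition tracking (i : Ics) (x : Q) (d : nat) : Prop :=
  frozen i x d \/ exists r, follows i x d r.

Definition saturated (i : Ics) (x : Q) (d : nat) : Prop :=
  frozen i x d \/ exists2 r, follows i x d r & starts_observable (obs i) r.

Lemma saturated_tracking i x d : saturated i x d -> tracking i x d.
Proof. by case=> [fr | [r fol _]]; [left | right; exists r]. Qed.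

Lemma saturated_lag i x d : saturated i x d -> ~ frozen i x d -> d < N - m i.
Proof.
case=> // -[r [p si_pr [run_p proj_p]] head_r] nfr.
rewrite ltnNge; apply/negP => le_d; apply: nfr.
have proj_r : proj (obs i) r = [::].
  apply: size0nil; move: (congr1 size (proj_si i)).
  rewrite si_pr proj_cat proj_p -(subnKC le_d) takeD !proj_cat !size_cat; lia.
have {head_r proj_r} r_nil : r = [::].
  by case: r head_r proj_r {si_pr} => // e r; rewrite /starts_observable proj_cons => ->.
have [x' run_si act] := aug_si i.
move: run_si act; rewrite si_pr r_nil cats0 run_p => -[<-] act.
by split=> //; have := m_le i; lia.
Qed.

Lemma saturated_observable_step i x d :
  saturated i x d -> ~ frozen i x d -> nth sigma u d \in obs i ->
  exists2 y, dH x (nth sigma u d) = Some y & tracking i y d.+1.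
Proof.
move=> sat nfr eo; have lag := saturated_lag sat nfr.
case: sat => // -[r [p si_pr [run_p proj_p]] head_r].
have d_u : d < size u by rewrite size_u; lia.
have take_d1 : take d.+1 u = rcons (take d u) (nth sigma u d) by rewrite (take_nth sigma).
set e := nth sigma u d in eo take_d1 *.
have proj_r : exists k, proj (obs i) r = e :: proj (obs i) k.
  have N_m : N - m i = d + (N - m i - d.+1).+1 by lia.
  have := proj_si i; rewrite si_pr proj_cat proj_p N_m.
  rewrite takeD (drop_nth sigma d_u) /= catA !proj_cat proj_cons eo.
  by move/eqP; rewrite eqseq_cat // => /andP[_ /eqP ->]; eexists.
case: r head_r proj_r si_pr => [_ [k] //| e' r]; rewrite /starts_observable => eo'.
rewrite proj_cons eo' => -[k [-> _]] si_pr.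
have [y step] : exists y, dH x e = Some y.
  by have [z run_si _] := aug_si i; apply: (ext_next (s' := r) run_p); rewrite -si_pr run_si.
exists y => //; right; exists r, (rcons p e); first by rewrite cat_rcons.
split; first by rewrite ext_rcons run_p.
by rewrite take_d1 -rcons_cat !proj_rcons eo proj_p.
Qed.

Lemma saturated_type1 f d i : d < N -> saturated i (f i) d ->
  exists y, [/\ caseD13 f d (nth sigma u d) i -> dH (f i) (nth sigma u d) = Some y,
                ~ caseD13 f d (nth sigma u d) i -> y = f i & tracking i y d.+1].
Proof.
move=> d_N sat; have [D13 | nD13] := classic (caseD13 f d (nth sigma u d) i).
  have [eo nfr] := (caseD13E _ _ _ _).1 D13.
  by have [y step tr] := saturated_observable_step sat nfr eo; exists y.
exists (f i); split=> //.
have [fr | nfr] := classic (frozen i (f i) d); first by left; apply: frozen_mono fr.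
have eo : nth sigma u d \notin obs i by apply/negP => eo; apply: nD13; apply/caseD13E.
case: sat => [// | [r [p si_pr [run_p proj_p]] _]].
right; exists r, p => //; split=> //.
by rewrite (take_nth sigma) ?size_u // -rcons_cat proj_rcons (negbTE eo) proj_p.
Qed.

Lemma saturate q f d i : reached (q, f, d) -> tracking i (f i) d ->
  exists f', [/\ reached (q, f', d), forall j, j != i -> f' j = f j & saturated i (f' i) d].
Proof.
move=> reach [fr | [r fol]]; first by exists f; split=> //; left.
elim: r f reach fol => [|e r IH] f reach [p si_pr [run_p proj_p]].
  by exists f; split=> //; right; exists [::] => //; exists p.
have [fr | nfr] := classic (frozen i (f i) d); first by exists f; split=> //; left.
case eo: (e \in obs i).
  by exists f; split=> //; right; exists (e :: r); [exists p | rewrite /starts_observable eo].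
have [y step] : exists y, dH (f i) e = Some y.
  by have [z run_si _] := aug_si i; apply: (ext_next (s' := r) run_p); rewrite -si_pr run_si.
pose f1 j := if j == i then y else f j.
have reach1 : reached (q, f1, d).
  apply: (vreach_step (e := e) reach); right; exists i; split.
    by apply/caseD24E; rewrite eo.
  rewrite /f1 eqxx; do 3!split=> //.
  by move=> j /eqP ji; rewrite (negbTE ji).
have fol1 : follows i (f1 i) d r.
  exists (rcons p e); first by rewrite cat_rcons.
  rewrite /f1 eqxx ext_rcons run_p; split=> //.
  by rewrite proj_rcons eo.
have [f' [reach' others sat]] := IH f1 reach1 fol1.
by exists f'; split=> // j ji; rewrite others // /f1 (negbTE ji).
Qed.

Lemma saturate_all q f d : reached (q, f, d) -> (forall i, tracking i (f i) d) ->
  exists f', reached (q, f', d) /\ forall i, saturated i (f' i) d.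
Proof.
move=> reach tr.
suff [f' [reach' _ sat]] : exists f', [/\ reached (q, f', d),
    forall i, tracking i (f' i) d & forall i, i \in enum (@predT Ics) -> saturated i (f' i) d].
  by exists f'; split=> // i; apply: sat; rewrite mem_enum.
elim: (enum (@predT Ics)) => [|a l [f1 [reach1 tr1 sat1]]]; first by exists f.
have [f2 [reach2 others sat2]] := saturate reach1 (tr1 a).
exists f2; split=> // i; have [-> | ia] := eqVneq i a.
- exact: saturated_tracking.
- by rewrite others.
- by [].
- by rewrite inE (negbTE ia) others //; apply: sat1.
Qed.

Lemma reach_prefix d : d <= N -> exists q f,
  [/\ ext dH q0 (t0 ++ take d u) = Some q, reached (q, f, d) & forall i, saturated i (f i) d].
Proof.
elim: d => [_ | d IH d_N].
  have [q run_t0] : exists q, ext dH q0 t0 = Some q by apply: ext_catl lang_s.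
  have start i : exists x, exists r, follows i x 0 r.
    have [p [r [si_pr proj_p _]]] := filter_eq_cat (etrans (proj_si i) (proj_cat _ _ _)).
    have [z run_si _] := aug_si i.
    have [x run_p] : exists x, ext dH q0 p = Some x.
      by apply: (ext_catl (s2 := r)); rewrite -si_pr run_si.
    by exists x, r, p; rewrite // take0 cats0.
  have [f0 start_f0] := fin_all_exists start.
  have reach0 : reached (q, f0, 0).
    apply: vreach_init; split=> //; exists t0; split; first by rewrite /lang run_t0.
    split=> // i; have [r [p _ [run_p]]] := start_f0 i; rewrite take0 cats0 => proj_p.
    by exists p; rewrite /lang run_p.
  have [f [reach sat]] := saturate_all reach0 (fun i => or_intror (start_f0 i)).
  by exists q, f; rewrite take0 cats0.
have [q [f [run_q reach sat]]] := IH (ltnW d_N).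
have d_u : d < size u by rewrite size_u.
have [q' run_q'] : exists q', ext dH q0 (t0 ++ take d.+1 u) = Some q'.
  by apply: (ext_catl (s2 := drop d.+1 u)); rewrite -catA cat_take_drop.
have step : dH q (nth sigma u d) = Some q'.
  by move: run_q'; rewrite (take_nth sigma d_u) -rcons_cat ext_rcons run_q.
have [f1 move_f1] := fin_all_exists (fun i => saturated_type1 d_N (sat i)).
have reach1 : reached (q', f1, d.+1).
  apply: (vreach_step (e := nth sigma u d) reach); left; do 3!split=> //.
  by move=> i; have [] := move_f1 i.
have [f' [reach' sat']] := saturate_all reach1 (fun i => let: And3 _ _ tr := move_f1 i in tr).
by exists q', f'.
Qed.

Lemma reach_full : exists2 q, ext dH q0 (t0 ++ u) = Some q &
  exists f : Ics -> Q, reached (q, f, N) /\ forall i, aug_active dH (delay i) (f i) sigma.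
Proof.
have [q [f [run_q reach sat]]] := reach_prefix (leqnn N).
exists q; first by rewrite -size_u take_size in run_q.
exists f; split=> // i.
have [[] // | nfr] := classic (frozen i (f i) N).
by have := saturated_lag (sat i) nfr; rewrite ltnNge leq_subr.
Qed.

End Simulation.

Lemma coobservable_of_no_violation :
  (forall i : Ics, delay i <= N) -> ~ violation_reachable -> delay_coobservable.
Proof.
move=> delay_le noviol s lang_s N_s langG nlangH si theta.
apply: NNPP => all_aug; apply: noviol.
have aug_si i : exists2 x, ext dH q0 (si i) = Some x & aug_active dH (delay i) x sigma.
  by apply/aug_lang_rcons; apply: NNPP => nacc; apply: all_aug; exists i.
have [t0 [u [s_tu size_u]]] : exists t0 u, s = t0 ++ u /\ size u = N.
  exists (take (size s - N) s), (drop (size s - N) s).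
  by rewrite cat_take_drop size_drop; split=> //; lia.
subst s.
have split_si i : exists k, k <= delay i /\
    proj (obs i) (si i) = proj (obs i) (t0 ++ take (N - k) u).
  have [k le_k ->] := theta i; exists k; split=> //.
  by rewrite -trunc_cat size_u ?leq_subr // subKn // (leq_trans le_k).
have [m m_spec] := fin_all_exists split_si.
have [q run_s [f [reach act_f]]] := reach_full size_u lang_s
  (fun i => (m_spec i).1) (fun i => (m_spec i).2) aug_si.
exists q, f; split=> //; split.
  exact/(lang_rcons _ (subautomaton_ext subH run_s)).
by split=> // /(lang_rcons _ run_s).
Qed.

End Verifier.

Theorem proposition2 (Q E : finType) (dG : Q -> E -> option Q) (q0 : Q)
  (QH : {set Q}) (dH : Q -> E -> option Q)
  (n : nat) (So Sc : 'I_n -> {set E}) (No : 'I_n -> nat) (sigma : E) :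
  is_subautomaton dG q0 QH dH ->
  (exists i : 'I_n, sigma \in Sc i) ->
  let N := \max_(i : Ic Sc sigma) No (val i) in
  (forall s : seq E, lang dH q0 s -> N <= size s ->
     lang dG q0 (rcons s sigma) -> ~ lang dH q0 (rcons s sigma) ->
     forall si : Ic Sc sigma -> seq E,
       (forall i, Theta (So (val i)) (No (val i)) s (proj (So (val i)) (si i))) ->
       exists i, ~ aug_lang dH (No (val i)) q0 (rcons (si i) sigma))
  <->
  ~ (exists (q : Q) (f : Ic Sc sigma -> Q),
       vreach So No dH q0 N (q, f, N) /\
       active dG q sigma /\ ~ active dH q sigma /\
       forall i, aug_active dH (No (val i)) (f i) sigma).
Proof.
move=> subH _ N.
have delay_le_N (i : Ic Sc sigma) : No (val i) <= N.
  exact: (@leq_bigmax _ (fun i : Ic Sc sigma => No (val i))).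
split; first exact: (@no_violation_of_coobservable _ _ dG dH q0 QH subH n So Sc No sigma N).
exact: (@coobservable_of_no_violation _ _ dG dH q0 QH subH n So Sc No sigma N delay_le_N).
Qed.
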